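(* Let $X\in\mathbb{R}^{d\times m}$ and $Y\in\mathbb{R}^{d\times n}$ satisfy $\mathrm{Span}(X)\cap\mathrm{Span}(Y)=\{0\}$. Then $$u^\intercal(XX^\intercal+YY^\intercal)^\dagger v=\begin{cases}u^\intercal(XX^\intercal)^\dagger v,& u,v\in\mathrm{Span}(X),\\ 0,& u\in\mathrm{Span}(X),\ v\in\mathrm{Span}(Y),\\ u^\intercal(YY^\intercal)^\dagger v,& u,v\in\mathrm{Span}(Y).\end{cases}$$
   Context: $\mathrm{Span}(X)$ is the column space of $X$; $A^\dagger$ is the Moore–Penrose pseudo-inverse. *)

From HB Require Import structures.
From mathcomp Require Import all_boot all_order all_algebra.
From mathcomp Require Import boolp classical_sets reals.
Set Implicit Arguments. Unset Strict Implicit. Unset Printing Implicit Defensive.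
Import Order.TTheory GRing.Theory Num.Theory.
Local Open Scope ring_scope.

Definition is_mp_pinv (R : realType) (m n : nat)
  (A : 'M[R]_(m, n)) (B : 'M[R]_(n, m)) : Prop :=
  [/\ A *m B *m A = A, B *m A *m B = B,
      (A *m B)^T = A *m B & (B *m A)^T = B *m A].

(* The Moore-Penrose pseudo-inverse A^dagger: the (unique, existing) matrix
   satisfying the Penrose conditions, selected by classical choice. *)
Definition mp_pinv (R : realType) (m n : nat) (A : 'M[R]_(m, n)) : 'M[R]_(n, m) :=
  xget 0 [set B | is_mp_pinv A B].

(* u \in Span(X), Span(X) = column space of X, i.e. u^T lies in the
   row space of X^T. *)
Definition in_span (R : realType) (d m : nat) (X : 'M[R]_(d, m)) (u : 'cV[R]_d) : bool :=
  (u^T <= X^T)%MS.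

From HB Require Import structures.
From mathcomp Require Import all_boot all_order all_algebra.
From mathcomp Require Import boolp classical_sets reals.
Import Order.TTheory GRing.Theory Num.Theory.
Local Open Scope ring_scope.

(* Only the first Penrose condition matters: let S be any generalized inverse
   of M = X X^T + Y Y^T, i.e. M S M = M.  Over the reals K^T K = 0 forces
   K = 0, so X X^T W = 0 implies X^T W = 0.  As the column spaces of X and Y
   meet only in 0, the identity X X^T (S M - 1) + Y Y^T (S M - 1) = 0 splits
   into its two summands, giving X^T S M = X^T.  Transposing and splitting
   once more gives X^T S X X^T = X^T and X^T S Y = 0.  The first identity,
   together with its analogue for a generalized inverse A of X X^T, yields
   X^T S X = X^T A X, which is the claim for u, v in Span(X); the case
   u, v in Span(Y) is symmetric. *)

Section MatrixAlgebra.
Set Implicit Arguments.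
Unset Strict Implicit.
Variable R : comPzRingType.

Lemma trmx_mulmx_bilin d m n (X : 'M[R]_(d, m)) (Y : 'M[R]_(d, n))
    (S : 'M[R]_d) (a : 'cV[R]_m) (b : 'cV[R]_n) :
  (X *m a)^T *m S *m (Y *m b) = a^T *m (X^T *m S *m Y) *m b.
Proof. by rewrite trmx_mul !mulmxA. Qed.

Lemma trmx_gram m n (X : 'M[R]_(m, n)) : (X *m X^T)^T = X *m X^T.
Proof. by rewrite trmx_mul trmxK. Qed.

Lemma ginv_trmx n (M S : 'M[R]_n) :
  M^T = M -> M *m S *m M = M -> M *m S^T *m M = M.
Proof.
by move=> sM hS; apply: trmx_inj; rewrite !trmx_mul trmxK sM mulmxA hS.
Qed.

End MatrixAlgebra.

Section Gram.
Set Implicit Arguments.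
Unset Strict Implicit.
Variable R : realFieldType.

Lemma trmx_mul_self_eq0 p q (K : 'M[R]_(p, q)) : K^T *m K = 0 -> K = 0.
Proof.
move=> hK; apply/matrixP=> i j; rewrite mxE.
have /matrixP/(_ j j) := hK; rewrite !mxE.
under eq_bigr do rewrite mxE.
move/psumr_eq0P => hsum.
have /eqP : K i j * K i j = 0.
  by apply: hsum => // k _; rewrite -expr2 sqr_ge0.
by rewrite mulf_eq0 orbb => /eqP.
Qed.

Lemma gram_mulKl d m k (X : 'M[R]_(d, m)) (W : 'M[R]_(d, k)) :
  X *m X^T *m W = 0 -> X^T *m W = 0.
Proof.
move=> hW; apply: trmx_mul_self_eq0.
by rewrite trmx_mul trmxK mulmxA -(mulmxA W^T) -mulmxA hW mulmx0.
Qed.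

Lemma gram_unitmx m n (G : 'M[R]_(m, n)) : row_free G -> G *m G^T \in unitmx.
Proof.
move=> freeG; rewrite -row_free_unit; apply: inj_row_free => v hv.
apply/eqP; rewrite -(mulmx_free_eq0 _ freeG); apply/eqP/trmx_inj.
rewrite trmx0 trmx_mul; apply: gram_mulKl.
by rewrite -trmx_gram -trmx_mul hv trmx0.
Qed.

Lemma gram_ginvK d m (X : 'M[R]_(d, m)) (A : 'M[R]_d) :
  X *m X^T *m A *m (X *m X^T) = X *m X^T -> X^T *m A *m X *m X^T = X^T.
Proof.
move=> hA; have /gram_mulKl : X *m X^T *m (A *m (X *m X^T) - 1%:M) = 0.
  by rewrite mulmxBr mulmx1 -[in X in _ - X]hA !mulmxA subrr.
by rewrite mulmxBr mulmx1 !mulmxA => /eqP; rewrite subr_eq0 => /eqP.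
Qed.

Section DisjointColumnSpaces.
Variables (d m n : nat) (X : 'M[R]_(d, m)) (Y : 'M[R]_(d, n)).
Hypothesis capXY : (X^T :&: Y^T)%MS = 0.

Local Notation M := (X *m X^T + Y *m Y^T).

Lemma colspace_sum_eq0 k (A : 'M[R]_(m, k)) (B : 'M[R]_(n, k)) :
  X *m A + Y *m B = 0 -> X *m A = 0 /\ Y *m B = 0.
Proof.
move=> /eqP; rewrite addr_eq0 => /eqP hXA.
suff hXA0 : X *m A = 0 by split; last by rewrite -[Y *m B]opprK -hXA hXA0 oppr0.
apply/trmx_inj/eqP; rewrite trmx0 -submx0 -capXY sub_capmx {1}trmx_mul submxMl.
by rewrite hXA linearN /= eqmx_opp trmx_mul submxMl.
Qed.

Lemma trmx_gram_sum : M^T = M.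
Proof. by rewrite linearD /= !trmx_gram. Qed.

Section GeneralizedInverse.
Variable S : 'M[R]_d.
Hypothesis hS : M *m S *m M = M.

Lemma ginv_sum_trmxKl : X^T *m S *m M = X^T.
Proof.
have h0 : X *m (X^T *m (S *m M - 1%:M)) + Y *m (Y^T *m (S *m M - 1%:M)) = 0.
  by rewrite !mulmxA -mulmxDl mulmxBr mulmx1 mulmxA hS subrr.
have /gram_mulKl : X *m X^T *m (S *m M - 1%:M) = 0.
  by rewrite -mulmxA; case: (colspace_sum_eq0 h0).
by rewrite mulmxBr mulmx1 !mulmxA => /eqP; rewrite subr_eq0 => /eqP.
Qed.

Lemma ginv_sum_gram : X^T *m S *m X *m X^T = X^T /\ X^T *m S *m Y = 0.
Proof.
have hT : M *m S^T *m X = X.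
  apply: trmx_inj.
  by rewrite !trmx_mul trmxK trmx_gram_sum mulmxA ginv_sum_trmxKl.
have h0 : X *m (X^T *m S^T *m X - 1%:M) + Y *m (Y^T *m S^T *m X) = 0.
  by rewrite mulmxBr mulmx1 addrAC !mulmxA -!mulmxDl hT subrr.
have [hX hY] := colspace_sum_eq0 h0; split.
  move/eqP: hX; rewrite mulmxBr mulmx1 subr_eq0 => /eqP hXX.
  by apply: trmx_inj; rewrite !trmx_mul !trmxK -[in RHS]hXX !mulmxA.
apply: trmx_inj; rewrite trmx0 !trmx_mul trmxK.
by apply: gram_mulKl; rewrite !mulmxA in hY *.
Qed.

Lemma ginv_sum_cross : X^T *m S *m Y = 0.
Proof. by case: ginv_sum_gram. Qed.

End GeneralizedInverse.

Lemma ginv_sum_diag (S A : 'M[R]_d) :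
    M *m S *m M = M -> X *m X^T *m A *m (X *m X^T) = X *m X^T ->
  X^T *m S *m X = X^T *m A *m X.
Proof.
move=> hS hA.
have hSX : X *m X^T *m S *m X = X.
  have [hSt _] := ginv_sum_gram (ginv_trmx trmx_gram_sum hS).
  by apply: trmx_inj; rewrite -[in RHS]hSt !trmx_mul !trmxK !mulmxA.
have -> : X^T *m A *m X = X^T *m A *m (X *m X^T *m S *m X) by rewrite hSX.
by rewrite -{1}(gram_ginvK hA) !mulmxA.
Qed.

End DisjointColumnSpaces.
End Gram.

Section PseudoInverse.
Set Implicit Arguments.
Unset Strict Implicit.
Variable R : realType.

(* (F G)^+ = G^+ F^+ with G^+ = G^T (G G^T)^-1 and F^+ = (F^T F)^-1 F^T. *)
Lemma is_mp_pinv_rank_factor m n r (F : 'M[R]_(m, r)) (G : 'M[R]_(r, n)) :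
    row_free F^T -> row_free G ->
  is_mp_pinv (F *m G) (G^T *m invmx (G *m G^T) *m invmx (F^T *m F) *m F^T).
Proof.
move=> freeFt freeG.
have uF : F^T *m F \in unitmx by rewrite -[F in _ *m F]trmxK gram_unitmx.
have uG := gram_unitmx freeG.
set P := invmx (F^T *m F); set Q := invmx (G *m G^T).
have sP : P^T = P by rewrite /P trmx_inv trmx_mul trmxK.
have sQ : Q^T = Q by rewrite /Q trmx_inv trmx_gram.
have hQ k (Z : 'M_(k, r)) : Z *m G *m G^T *m Q = Z.
  by rewrite -!mulmxA (mulmxA G) mulmxV ?mulmx1.
have hP k (Z : 'M_(k, r)) : Z *m P *m F^T *m F = Z.
  by rewrite -!mulmxA mulVmx ?mulmx1.
have AB : F *m G *m (G^T *m Q *m P *m F^T) = F *m P *m F^T.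
  by rewrite !mulmxA hQ.
have BA : G^T *m Q *m P *m F^T *m (F *m G) = G^T *m Q *m G.
  by rewrite !mulmxA hP.
split.
- by rewrite AB !mulmxA hP.
- by rewrite BA !mulmxA hQ.
- by rewrite AB !trmx_mul trmxK sP !mulmxA.
- by rewrite BA !trmx_mul trmxK sQ !mulmxA.
Qed.

Lemma mp_pinvP m n (A : 'M[R]_(m, n)) : is_mp_pinv A (mp_pinv A).
Proof.
apply: xgetPex.
have freeC : row_free (col_base A)^T.
  by rewrite /row_free mxrank_tr; exact: col_base_full.
have := is_mp_pinv_rank_factor freeC (row_base_free A).
by rewrite mulmx_base => hB; eexists; exact: hB.
Qed.

Lemma in_spanP d m (X : 'M[R]_(d, m)) (u : 'cV[R]_d) :
  reflect (exists a : 'cV[R]_m, u = X *m a) (in_span X u).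
Proof.
apply: (iffP submxP) => [[p hp] | [a ->]].
  by exists p^T; rewrite -[u]trmxK hp trmx_mul trmxK.
by exists a^T; rewrite trmx_mul.
Qed.

Lemma in_span_capmx0 d m n (X : 'M[R]_(d, m)) (Y : 'M[R]_(d, n)) :
    (forall w : 'cV[R]_d, in_span X w -> in_span Y w -> w = 0) ->
  (X^T :&: Y^T)%MS = 0.
Proof.
move=> hXY; apply/eqP; rewrite -submx0; apply/row_subP => i.
rewrite submx0; apply/eqP/trmx_inj; rewrite trmx0.
apply: hXY; rewrite /in_span trmxK; apply: submx_trans (row_sub i _) _.
  exact: capmxSl.
exact: capmxSr.
Qed.

End PseudoInverse.

Theorem lemma18 (R : realType) (d m n : nat)
  (X : 'M[R]_(d, m)) (Y : 'M[R]_(d, n))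
  (hXY : forall w : 'cV[R]_d, in_span X w -> in_span Y w -> w = 0) :
  let S := mp_pinv (X *m X^T + Y *m Y^T) in
  [/\ (forall u v : 'cV[R]_d, in_span X u -> in_span X v ->
         u^T *m S *m v = u^T *m mp_pinv (X *m X^T) *m v),
      (forall u v : 'cV[R]_d, in_span X u -> in_span Y v ->
         u^T *m S *m v = 0)
    & (forall u v : 'cV[R]_d, in_span Y u -> in_span Y v ->
         u^T *m S *m v = u^T *m mp_pinv (Y *m Y^T) *m v)].
Proof.
move=> S.
have capXY := in_span_capmx0 hXY.
have capYX : (Y^T :&: X^T)%MS = 0 by rewrite capmxC.
have [hS _ _ _] := mp_pinvP (X *m X^T + Y *m Y^T).
have hS' : (Y *m Y^T + X *m X^T) *m S *m (Y *m Y^T + X *m X^T)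
    = Y *m Y^T + X *m X^T by rewrite addrC.
have [hA _ _ _] := mp_pinvP (X *m X^T).
have [hB _ _ _] := mp_pinvP (Y *m Y^T).
split=> u v /in_spanP[a ->] /in_spanP[b ->]; rewrite !trmx_mulmx_bilin.
- by rewrite (ginv_sum_diag capXY hS hA).
- by rewrite (ginv_sum_cross capXY hS) mulmx0 mul0mx.
- by rewrite (ginv_sum_diag capYX hS' hB).
Qed.
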